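(* Consider the setting described in the context and assume $D>2$. For $t\ge 1$ let $\mathcal{I}_0(t)=\bigcup_{m=0}^{t-1}\mathcal{F}_0(m)$ and $\mathcal{I}_1(t)=\Big(\bigcup_{m=0}^{t-1}\mathcal{F}_{D-1}(m)\Big)\setminus \mathcal{I}_0(t)$. Then for every $t\ge1$, $a_i(t)=1$ for all $i\in\mathcal{I}_1(t)$.
   Context: $G=(V,E)$ is a finite connected undirected graph with node set $V=\{0,\dots,N-1\}$; $\mathcal{N}(i)$ denotes the set of neighbours of $i$. Every edge has length $1$, $d_{ij}$ is the hop distance between $i$ and $j$, and $\mathcal{F}_k(m)=\{i\in V : d_{ik}=m\}$. Every node carries value $v_i=1$. The source set is $S(t)=\{D-1\}$ for $t\le 0$ and $S(t)=\{0\}$ for $t\ge 1$. The integer $D$ satisfies $\max_{i\in V}d_{i0}=D-1$, and nodes are labelled so that $0,1,\dots,D-1$ is a path in which node $i$ is a neighbour of $i+1$ with $d_{0,i}=i$ for $0\le i\le D-1$. The algorithm updates, for $t\ge1$: $\hat d_i(t)=0$ if $i\in S(t)$, and $\hat d_i(t)=\min_{j\in\mathcal{N}(i)}\{\hat d_j(t-1)+1\}$ otherwise; $c_i(t)=i$ if $i\in S(t)$, and otherwise $c_i(t)$ is a minimizer $j\in\mathcal{N}(i)$ of $\hat d_j(t-1)+1$; $C_i(t)=\{j : c_j(t-1)=i \text{ and } \hat d_j(t-1)=\hat d_i(t)+1\}$; $a_i(t)=\sum_{j\in C_i(t)}a_j(t-1)+v_i$. Initial values $(\hat d_i(0),c_i(0),a_i(0))$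 are steady-state values of these recursions when the source set is constantly $\{D-1\}$; in particular $\hat d_i(0)=m$ for all $i\in\mathcal{F}_{D-1}(m)$, and for every integer $m$, $\sum_{i\in\mathcal{F}_{D-1}(m)}a_i(0)\le N$. *)

From mathcomp Require Import all_boot all_order.
Set Implicit Arguments. Unset Strict Implicit. Unset Printing Implicit Defensive.

Section Graph.
Variable n : nat.
(* Vertex set V = {0, ..., N-1} with N = n.+1 nodes. *)
Local Notation V := 'I_n.+1.
Variable e : rel V.  (* adjacency: j \in N(i) iff e i j *)

Definition undirected := symmetric e /\ irreflexive e.
Definition connected_graph := forall i j : V, connect e i j.

Fixpoint walkn (k : nat) (i j : V) : bool :=
  if k is k'.+1 then [exists l, e i l && walkn k' l j] else i == j.

(* hop distance: least k with a walk of length k from i to j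
   (equals n.+1 when j is unreachable, which cannot happen in a connected graph) *)
Definition dist (i j : V) : nat := find (fun k => walkn k i j) (iota 0 n.+1).

Definition F (k : V) (m : nat) : {set V} := [set i | dist i k == m].

(* Source set: S(t) = {D-1} for t <= 0, {0} for t >= 1 (t : nat) *)
Definition S (D t : nat) : {set V} :=
  if t == 0 then [set (inord D.-1 : V)] else [set (inord 0 : V)].

(* C_i(t) for the run (dh, c) : children j with c_j(t-1) = i and
   dh_j(t-1) = dh_i(t) + 1 ; here stated for time t.+1 *)
Definition children (dh : nat -> V -> nat) (c : nat -> V -> V) (t : nat) (i : V)
  : {set V} := [set j | (c t j == i) && (dh t j == (dh t.+1 i).+1)].

Definition step_ok (Src : {set V}) (dh : nat -> V -> nat) (c : nat -> V -> V)
  (a : nat -> V -> nat) (t : nat) : Prop :=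
  forall i : V,
    [/\ (i \in Src -> dh t.+1 i = 0 /\ c t.+1 i = i),
        (i \notin Src ->
           [/\ e i (c t.+1 i),
               (forall j, e i j -> dh t (c t.+1 i) <= dh t j)
             & dh t.+1 i = (dh t (c t.+1 i)).+1])
      & a t.+1 i = \sum_(j in children dh c t i) a t j + 1].

(* The initial state (dh 0, c 0, a 0) is a steady state of the recursions
   with constant source set {D-1} (all values v_i = 1). *)
Definition steady_state (D : nat) (d0 : V -> nat) (c0 : V -> V) (a0 : V -> nat)
  : Prop :=
  let s : V := inord D.-1 in
  forall i : V,
    [/\ (i = s -> d0 i = 0 /\ c0 i = i),
        (i <> s ->
           [/\ e i (c0 i),
               (forall j, e i j -> d0 (c0 i) <= d0 j)
             & d0 i = (d0 (c0 i)).+1])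
      & a0 i = \sum_(j | (c0 j == i) && (d0 j == (d0 i).+1)) a0 j + 1].

End Graph.

From mathcomp Require Import all_boot all_order.
From mathcomp Require Import zify.
Set Implicit Arguments. Unset Strict Implicit. Unset Printing Implicit Defensive.

(* Write d̂_i(-1) for d̂_i(0).  A child j of i at time t satisfies
   d̂_j(t-1) = d̂_i(t) + 1, while the update rule (or, for t = 1, the steady
   state) gives d̂_j(t-1) <= d̂_i(t-2) + 1; so a node with a child has
   d̂_i(t) <= d̂_i(t-2).  Once the source is 0, the estimates never drop below
   min(t, d_{i0}), and since they start from the distances to D-1 they exceed
   those distances by at most the elapsed time: d̂_i(t-2) <= max(d_{i,D-1}, t-1).
   For i in I_1(t) this reads t <= d̂_i(t) <= d̂_i(t-2) <= t-1, so C_i(t) is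
   empty and a_i(t) = v_i = 1. *)

Section Distance.
Variables (n : nat) (e : rel 'I_n.+1).
Implicit Types x y z : 'I_n.+1.

Lemma dist_le_walkn k x y : walkn e k x y -> dist e x y <= k.
Proof.
move=> walk_k; rewrite /dist; have [k_lt | k_ge] := ltnP k n.+1.
  rewrite leqNgt; apply/negP => /(before_find 0).
  by rewrite nth_iota // add0n walk_k.
by apply: leq_trans (find_size _ _) _; rewrite size_iota.
Qed.

Lemma walkn_dist x y : dist e x y < n.+1 -> walkn e (dist e x y) x y.
Proof.
move=> lt_d; have has_walk : has (fun k => walkn e k x y) (iota 0 n.+1).
  by rewrite has_find size_iota.
by have := nth_find 0 has_walk; rewrite nth_iota // add0n.
Qed.

Lemma dist_le_size x y : dist e x y <= n.+1.
Proof. by apply: leq_trans (find_size _ _) _; rewrite size_iota. Qed.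

Lemma distxx x : dist e x x = 0.
Proof. by apply/eqP; rewrite -leqn0; apply: (@dist_le_walkn 0) => /=. Qed.

Lemma dist_eq0 x y : dist e x y = 0 -> x = y.
Proof.
move=> d0; have /walkn_dist : dist e x y < n.+1 by rewrite d0.
by rewrite d0 => /eqP.
Qed.

Lemma dist_adj x y z : e x y -> dist e x z <= (dist e y z).+1.
Proof.
move=> exy; have [lt_d | ge_d] := ltnP (dist e y z) n.+1.
  by apply: dist_le_walkn; apply/existsP; exists y; rewrite exy; apply: walkn_dist.
by apply: leq_trans (dist_le_size x z) _; apply: leq_trans ge_d _.
Qed.

Lemma walkn_path x p : path e x p -> walkn e (size p) x (last x p).
Proof.
elim: p x => [|y p IHp] x //= /andP[exy py].
by apply/existsP; exists y; rewrite exy IHp.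
Qed.

Lemma connect_dist_lt x y : connect e x y -> dist e x y < n.+1.
Proof.
case/connectP=> p px_p ->; case: (shortenP px_p) => q px_q uniq_q _.
have := dist_le_walkn (walkn_path px_q).
have := max_card (mem (x :: q)); rewrite (card_uniqP uniq_q) card_ord /=.
lia.
Qed.

Lemma dist_closer_adj x y : 0 < dist e x y < n.+1 ->
  exists2 w, e x w & dist e w y < dist e x y.
Proof.
case/andP=> d_gt0 /walkn_dist; case: (dist e x y) d_gt0 => // d _ /=.
by case/existsP=> w /andP[exw /dist_le_walkn]; exists w.
Qed.

End Distance.

Lemma steady_state_parent n (e : rel 'I_n.+1) D d0 c0 a0 :
  steady_state e D d0 c0 a0 -> forall j, d0 j <= (d0 (c0 j)).+1.
Proof.
move=> steady j; have [src_j nsrc_j _] := steady j.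
have [/src_j[-> _] // | ne_j] := eqVneq j (inord D.-1).
by have [_ _ ->] := nsrc_j (elimN eqP ne_j).
Qed.

Section SingleSource.
Variables (n : nat) (e : rel 'I_n.+1) (z : 'I_n.+1).
Variables (dh : nat -> 'I_n.+1 -> nat) (c : nat -> 'I_n.+1 -> 'I_n.+1).
Variable a : nat -> 'I_n.+1 -> nat.
Hypothesis step : forall t, step_ok e [set z] dh c a t.
Implicit Types x j : 'I_n.+1.

Lemma dh_source t : dh t.+1 z = 0.
Proof. by have [src _ _] := step t z; case: src; rewrite ?inE. Qed.

Lemma step_nsource t x : x != z ->
  [/\ e x (c t.+1 x), forall w, e x w -> dh t (c t.+1 x) <= dh t w
     & dh t.+1 x = (dh t (c t.+1 x)).+1].
Proof. by move=> ne_xz; have [_ nsrc _] := step t x; apply: nsrc; rewrite inE. Qed.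

Lemma dh_succ_le_adj t x w : x != z -> e x w -> dh t.+1 x <= (dh t w).+1.
Proof. by move=> /(step_nsource t)[_ min_c ->] /min_c. Qed.

Lemma dh_ge_min_dist t x : minn t (dist e x z) <= dh t x.
Proof.
elim: t x => [|t IHt] x; first by rewrite min0n.
have [-> | ne_xz] := eqVneq x z; first by rewrite distxx minn0.
have [exc _ ->] := step_nsource t ne_xz.
by have := IHt (c t.+1 x); have := dist_adj z exc; lia.
Qed.

Hypothesis dh0_parent : forall j, dh 0 j <= (dh 0 (c 0 j)).+1.

Lemma dh_parent t j : dh t j <= (dh t.-1 (c t j)).+1.
Proof.
case: t => [|t] /=; first exact: dh0_parent.
have [-> | ne_jz] := eqVneq j z; first by rewrite dh_source.
by have [_ _ ->] := step_nsource t ne_jz.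
Qed.

Lemma dh_children t i j : j \in children dh c t i -> dh t.+1 i <= dh t.-1 i.
Proof.
rewrite inE => /andP[/eqP cj /eqP dhj].
by have := dh_parent t j; rewrite dhj cj.
Qed.

Lemma a_childless t i : dh t.-1 i < dh t.+1 i -> a t.+1 i = 1.
Proof.
move=> dh_lt; have [_ _ ->] := step t i; rewrite big1 // => j /dh_children.
by rewrite leqNgt dh_lt.
Qed.

Variables (s y : 'I_n.+1).
Hypothesis e_sym : symmetric e.
Hypothesis connected : connected_graph e.
Hypothesis adj_s : e s y.
Hypothesis dh0_dist : forall x, dh 0 x = dist e x s.

Lemma dh_le_max_dist t x : dh t x <= maxn (dist e x s) t.+1.
Proof.
elim: t x => [|t IHt] x; first by rewrite dh0_dist leq_maxl.
have [-> | ne_xz] := eqVneq x z; first by rewrite dh_source.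
have [d0 | d_gt0] := posnP (dist e x s).
  move/dist_eq0: d0 => -> in ne_xz *.
  have := dh_succ_le_adj t ne_xz adj_s; have := IHt y.
  have := dist_adj s (etrans (e_sym y s) adj_s); rewrite distxx; lia.
have [w exw lt_d] : exists2 w, e x w & dist e w s < dist e x s.
  by apply: dist_closer_adj; rewrite d_gt0 connect_dist_lt.
by have := dh_succ_le_adj t ne_xz exw; have := IHt w; lia.
Qed.

End SingleSource.

Theorem lemma3 (n : nat) (e : rel 'I_n.+1) (D : nat)
  (dh : nat -> 'I_n.+1 -> nat) (c : nat -> 'I_n.+1 -> 'I_n.+1)
  (a : nat -> 'I_n.+1 -> nat) :
  undirected e ->
  connected_graph e ->
  2 < D ->
  (* max_i d_{i0} = D - 1 *)
  \max_(i : 'I_n.+1) dist e i (inord 0) = D - 1 ->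
  (* 0, 1, ..., D-1 is a path with d_{0,i} = i *)
  (forall k, k < D - 1 -> e (inord k) (inord k.+1)) ->
  (forall k, k <= D - 1 -> dist e (inord 0) (inord k) = k) ->
  (* initial values: steady state for constant source {D-1} *)
  steady_state e D (dh 0) (c 0) (a 0) ->
  (forall i, dh 0 i = dist e i (inord (D - 1))) ->
  (forall m, \sum_(i in F e (inord (D - 1)) m) a 0 i <= n.+1) ->
  (* the algorithm's updates for t >= 1 *)
  (forall t, step_ok e (S n D t.+1) dh c a t) ->
  forall t, 1 <= t ->
  forall i, i \in [set j | dist e j (inord (D - 1)) < t]
                   :\: [set j | dist e j (inord 0) < t] ->
  a t i = 1.
Proof.
move=> [e_sym _] connected D_gt2 _ path_e _ steady dh0 _ step [//|t] _ i.
rewrite !inE -leqNgt => /andP[le_tz lt_ts].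
have adj_s : e (inord (D - 1)) (inord (D - 2)).
  by rewrite e_sym (_ : D - 1 = (D - 2).+1) ?path_e; lia.
have parent0 := steady_state_parent steady.
apply: (a_childless step parent0).
have := dh_ge_min_dist step t.+1 i.
case: t le_tz lt_ts => [|t] le_tz lt_ts /=; first by rewrite dh0; lia.
have := dh_le_max_dist step e_sym connected adj_s dh0 t i; lia.
Qed.
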